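(* Let $m\ge 2$ and let $H_1,\dots,H_k$ be complete graphs, each with at least two vertices. Then for every $n$, $\mathrm{ex}^{\mathrm{col}}(n,(H_1,\dots,H_k),K_m)=\max_{i\le k}\mathcal N(H_i,T_{m-1}(n))$; that is, the maximum of $\sum_{i=1}^k\mathcal N(H_i,G_i)$ over edge-colored $K_m$-free $n$-vertex graphs $G$ is attained by the Tur\'an graph $T_{m-1}(n)$ with all edges of a single color.
   Context: $T_{m-1}(n)$ is the complete $(m-1)$-partite graph on $n$ vertices with parts of size $\lfloor n/(m-1)\rfloor$ or $\lceil n/(m-1)\rceil$. $\mathcal N(H,G)$ is the number of subgraphs of $G$ isomorphic to $H$. For a graph $G$ whose edges are colored with colors $1,\dots,k$, $G_i$ is the subgraph of edges of color $i$; $\mathrm{ex}^{\mathrm{col}}(n,(H_1,\dots,H_k),F)$ is the maximum of $\sum_i\mathcal N(H_i,G_i)$ over all $F$-free $n$-vertex graphs $G$ and all such colorings. *)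

From mathcomp Require Import all_boot.
Set Implicit Arguments. Unset Strict Implicit. Unset Printing Implicit Defensive.

(* An edge-coloured simple graph on vertex set 'I_n with colours 'I_k:
   c (x,y) = Some i  iff xy is an edge of colour i; None iff not an edge. *)
Definition colgraph (n k : nat) := {ffun 'I_n * 'I_n -> option 'I_k}.

Definition valid_colgraph n k (c : colgraph n k) : bool :=
  [forall x, c (x, x) == None] && [forall x, forall y, c (x, y) == c (y, x)].

Definition cg_adj n k (c : colgraph n k) : rel 'I_n := fun x y => c (x, y) != None.
Definition cg_col n k (c : colgraph n k) (i : 'I_k) : rel 'I_n :=
  fun x y => c (x, y) == Some i.

Definition is_clique n (r : rel 'I_n) (S : {set 'I_n}) : bool :=
  [forall x in S, forall y in S, (x != y) ==> r x y].

Definition numK n (a : nat) (r : rel 'I_n) : nat :=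
  #|[set S : {set 'I_n} | (#|S| == a) && is_clique r S]|.

Definition Kfree n (m : nat) (r : rel 'I_n) : bool :=
  [forall S : {set 'I_n}, (#|S| == m) ==> ~~ is_clique r S].

Definition ex_col (n k : nat) (a : 'I_k -> nat) (m : nat) : nat :=
  \max_(c : colgraph n k | valid_colgraph c && Kfree m (cg_adj c))
     \sum_(i < k) numK (a i) (cg_col c i).

(* Turan graph T_{m-1}(n): parts are residue classes mod (m-1), hence of
   sizes floor(n/(m-1)) or ceil(n/(m-1)) *)
Definition turan (m n : nat) : rel 'I_n :=
  fun x y => (x %% (m - 1)) != (y %% (m - 1)).
Arguments turan m n : clear implicits.
Arguments ex_col n k a m : clear implicits.

From mathcomp Require Import all_boot fingroup perm zify.
Set Implicit Arguments. Unset Strict Implicit. Unset Printing Implicit Defensive.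

(* Write P_s(G, w) for the sum, over the s-cliques of G, of the product of the vertex
   weights w, so that N(K_s, G) = P_s(G, 1). For non-adjacent u, v, P_s is affine in
   (w u, w v), so moving all the weight of one of them onto the other, in the right
   direction, does not decrease al * P_a - be * P_b. Iterating this (Zykov
   symmetrization) concentrates a weighting of total n on a clique; in a K_m-free graph
   that is at most m - 1 vertices, where P_s is the elementary symmetric function e_s of
   the m - 1 weights. Among sequences of m - 1 naturals summing to n, the balanced one
   maximizes e_2 and e_a / e_2: moving a unit from an entry to one smaller by at least 2
   increases e_2 and, as e_a <= e_2 e_(a-2), does not decrease e_a / e_2. Since the
   vertices of a part of T_(m-1)(n) are twins, the same weight moves show that e_s of the
   balanced sequence is t_s = N(K_s, T_(m-1)(n)). Hence a K_m-free G has
   N(K_2, G) <= t_2 and N(K_a, G) t_2 <= N(K_2, G) t_a; summed over the colour classes,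
   whose edge numbers add up to at most t_2, this bounds the colour sum by max_i t_(a_i),
   which the monochromatic Turan graph attains. *)

Fixpoint elemsym (l : seq nat) (s : nat) : nat :=
  match l with
  | [::] => (s == 0)
  | x :: l' => elemsym l' s + (if s is s'.+1 then x * elemsym l' s' else 0)
  end.

Lemma elemsym0 l : elemsym l 0 = 1.
Proof. by elim: l => //= x l ->. Qed.

Lemma elemsym_cons2 x y l s :
  elemsym [:: x, y & l] s.+2 = elemsym l s.+2 + (x + y) * elemsym l s.+1 + x * y * elemsym l s.
Proof. rewrite /=; lia. Qed.

Lemma perm_elemsym l1 l2 : perm_eq l1 l2 -> elemsym l1 =1 elemsym l2.
Proof.
have cons_ext x l l' : elemsym l =1 elemsym l' -> elemsym (x :: l) =1 elemsym (x :: l').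
  by move=> e [|s] /=; rewrite !e.
have swap x y l : elemsym [:: x, y & l] =1 elemsym [:: y, x & l] by case=> [|[|s]] /=; lia.
elim: l1 l2 => [|x l1 IH] l2 hp; first by move/perm_size: hp; case: l2.
have xl2 : x \in l2 by rewrite -(perm_mem hp) mem_head.
case/splitPr: xl2 hp => p1 p2 hp.
have /IH e : perm_eq l1 (p1 ++ p2).
  by rewrite -(perm_cons x) (perm_trans hp) // -cat1s perm_catCA.
move=> s.
suff -> : elemsym (p1 ++ x :: p2) s = elemsym (x :: p1 ++ p2) s by apply: cons_ext.
elim: p1 {e hp} s => [|z p1 IHp] //= s.
by rewrite -/(elemsym (z :: (p1 ++ x :: p2)) s) (cons_ext z _ _ IHp) swap.
Qed.

Lemma elemsym_cat_nseq0 l k : elemsym (l ++ nseq k 0) =1 elemsym l.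
Proof.
elim: l => [|x l IH] [|s] /=; rewrite ?IH //.
  by elim: k => //= k ->.
by elim: k s => [|k IHk] [|s] //=; rewrite IHk.
Qed.

Lemma elemsym_filter_neq0 l : elemsym [seq x <- l | x != 0] =1 elemsym l.
Proof.
elim: l => [|x l IH] //= [|s] /=; case: eqP => [->|_] /=; rewrite ?IH //.
  by rewrite addn0.
by rewrite mul0n addn0.
Qed.

Lemma elemsymD_le l p q : elemsym l (p + q) <= elemsym l p * elemsym l q.
Proof.
elim: l p q => [|x l IH] p q; first by case: p; case: q.
case: p => [|p]; first by rewrite elemsym0 mul1n.
case: q => [|q]; first by rewrite elemsym0 addn0 muln1.
have := IH p.+1 q.+1; have := IH p q.+1; have := IH p.+1 q; have := IH p q.
rewrite !addSn !addnS /=; nia.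
Qed.

Definition balanced_seq r n := nseq (r - n %% r) (n %/ r) ++ nseq (n %% r) (n %/ r).+1.

Lemma filter_pred1_nseq v (l : seq nat) :
  filter (pred1 v) l = nseq (count (pred1 v) l) v.
Proof.
rewrite -size_filter; apply/all_pred1P.
by apply/allP => z; rewrite mem_filter => /andP[].
Qed.

Lemma elemsym_balanced l r n : 0 < r -> size l = r -> sumn l = n ->
  {in l &, forall x y, x <= y.+1} -> elemsym l =1 elemsym (balanced_seq r n).
Proof.
move=> r0 hs hn hb.
have [z zl] : exists z, z \in l by case: l hs r0 {hb hn} => [<-|z l] //; exists z; rewrite mem_head.
case: (ex_minnP (ex_intro _ z zl)) => q ql qmin.
have hq z' : z' \in l -> (z' == q) || (z' == q.+1).
  by move=> z'l; have := qmin _ z'l; have := hb _ _ z'l ql; lia.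
set B := count (pred1 q) l; set A := count (pred1 q.+1) l.
have hp : perm_eq l (nseq B q ++ nseq A q.+1).
  rewrite -!filter_pred1_nseq perm_sym.
  have -> : filter (pred1 q.+1) l = filter (predC (pred1 q)) l.
    by apply: eq_in_filter => z' /hq /=; lia.
  by rewrite perm_filterC.
have hsz : B + A = r by rewrite -hs (perm_size hp) size_cat !size_nseq.
have hsum : n = B * q + A * q.+1.
  by rewrite -hn (perm_sumn hp) sumn_cat !sumn_nseq mulnC (mulnC A).
move=> s; rewrite (perm_elemsym hp s) /balanced_seq.
have [Alt|Age] := ltnP A r.
  have nq : n %/ r = q.
    apply/eqP; rewrite eqn_leq -ltnS ltn_divLR // leq_divRL //; lia.
  have nA : n %% r = A by move: (divn_eq n r); rewrite nq; lia.
  by rewrite nq nA -hsz addnK.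
have eA : A = r by lia.
have eB : B = 0 by lia.
by rewrite hsum eA eB mul0n add0n mulKn // modnMr subn0 cats0.
Qed.

Lemma smoothing_ind (P : seq nat -> Prop) :
  (forall l1 l2, perm_eq l1 l2 -> P l1 -> P l2) ->
  (forall l, {in l &, forall x y, x <= y.+1} -> P l) ->
  (forall x y l, y.+2 <= x -> P [:: x.-1, y.+1 & l] -> P [:: x, y & l]) ->
  forall l, P l.
Proof.
move=> Pperm Pbal Psmooth l.
have [N] := ubnP (sumn [seq x * x | x <- l]); elim: N l => // N IH l hN.
have [/hasP[x xl /hasP[y yl hxy]]|/hasPn unsmooth] :=
  boolP (has (fun x => has (fun y => y.+2 <= x) l) l); last first.
  apply: Pbal => x y xl yl; have /hasPn/(_ y yl) := unsmooth x xl; lia.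
have yr : y \in rem x l.
  have yx : (x == y) = false by apply/eqP; lia.
  by rewrite -has_pred1 has_count count_mem_rem yx subn0 -has_count has_pred1.
have hp : perm_eq [:: x, y & rem y (rem x l)] l.
  by rewrite perm_sym (perm_trans (perm_to_rem xl)) // perm_cons perm_to_rem.
apply: (Pperm _ _ hp); apply: (Psmooth _ _ _ hxy); apply: IH.
have : x.-1 * x.-1 + y.+1 * y.+1 < x * x + y * y by nia.
move: hN; rewrite -(perm_sumn (perm_map _ hp)) /=; lia.
Qed.

Section Smoothing.
Variables (x y : nat) (l : seq nat).
Hypothesis hxy : y.+2 <= x.

Lemma elemsym2_smooth : elemsym [:: x.-1, y.+1 & l] 2 = elemsym [:: x, y & l] 2 + (x - y.+1).
Proof.
have [d ->] : exists d, x = d + y.+2 by exists (x - y.+2); lia.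
rewrite !elemsym_cons2 elemsym0; nia.
Qed.

Lemma elemsym_ratio_smooth a : 2 <= a ->
  elemsym [:: x, y & l] a * elemsym [:: x.-1, y.+1 & l] 2 <=
  elemsym [:: x.-1, y.+1 & l] a * elemsym [:: x, y & l] 2.
Proof.
case: a => [|[|a]] // _; rewrite elemsym2_smooth.
have ea_le : elemsym [:: x, y & l] a.+2 <= elemsym [:: x, y & l] 2 * elemsym l a.
  have := elemsymD_le l 2 a; have := elemsymD_le l 1 a.
  rewrite !elemsym_cons2 elemsym0 add2n add1n; nia.
have -> : elemsym [:: x.-1, y.+1 & l] a.+2 = elemsym [:: x, y & l] a.+2 + (x - y.+1) * elemsym l a.
  have [d ->] : exists d, x = d + y.+2 by exists (x - y.+2); lia.
  rewrite !elemsym_cons2; nia.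
nia.
Qed.

End Smoothing.

Lemma balanced_seq_extremal r n (Q : seq nat -> Prop) : 0 < r ->
  (forall l1 l2, elemsym l1 =1 elemsym l2 -> Q l1 -> Q l2) ->
  Q (balanced_seq r n) ->
  (forall x y l, y.+2 <= x -> Q [:: x.-1, y.+1 & l] -> Q [:: x, y & l]) ->
  forall l, size l = r -> sumn l = n -> Q l.
Proof.
move=> r0 Qesym Qbal Qsmooth.
apply: smoothing_ind => [l1 l2 hp Q1 s2 n2 | l hb s n' | x y l hxy Q' s n'].
- by apply: (Qesym l1 l2 (perm_elemsym hp)); apply: Q1; rewrite ?(perm_size hp) ?(perm_sumn hp).
- by apply: (Qesym _ _ _ Qbal) => s'; rewrite (elemsym_balanced r0 s n' hb).
- by apply: (Qsmooth _ _ _ hxy); apply: Q'; rewrite -?s -?n' /=; lia.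
Qed.

Lemma elemsym2_le_balanced r n l : 0 < r -> size l = r -> sumn l = n ->
  elemsym l 2 <= elemsym (balanced_seq r n) 2.
Proof.
move=> r0; move: l; apply: (balanced_seq_extremal (Q := fun l => _ l 2 <= _)) => //.
  by move=> l1 l2 e; rewrite e.
by move=> x y l hxy h; apply: leq_trans h; rewrite elemsym2_smooth // leq_addr.
Qed.

Lemma elemsym_ratio_le_balanced r n a l : 0 < r -> 2 <= a -> size l = r -> sumn l = n ->
  elemsym l a * elemsym (balanced_seq r n) 2 <= elemsym l 2 * elemsym (balanced_seq r n) a.
Proof.
move=> r0 a2; move: l.
set E := elemsym _ 2; set N := elemsym _ a.
apply: (balanced_seq_extremal (Q := fun l => elemsym l a * E <= elemsym l 2 * N)) => //.
- by move=> l1 l2 e; rewrite !e.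
- by rewrite mulnC.
move=> x y l hxy hQ.
have pos : 0 < elemsym [:: x.-1, y.+1 & l] 2.
  by rewrite elemsym2_smooth // addn_gt0 subn_gt0 hxy orbT.
rewrite -(leq_pmul2r pos).
apply: (@leq_trans (elemsym [:: x.-1, y.+1 & l] a * elemsym [:: x, y & l] 2 * E)).
  by rewrite mulnAC leq_mul2r elemsym_ratio_smooth ?orbT.
by rewrite mulnAC; nia.
Qed.

Section Cliques.
Variable n : nat.
Implicit Types (r : rel 'I_n) (S : {set 'I_n}).

Lemma cliqueP r S :
  reflect {in S &, forall x y, x != y -> r x y} (is_clique r S).
Proof.
apply: (iffP forallP) => [h x y xS yS nxy | h x].
  by move: (h x); rewrite xS /= => /forallP /(_ y); rewrite yS nxy.
by apply/implyP => xS; apply/forallP => y; apply/implyP => yS; apply/implyP; apply: h.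
Qed.

Lemma sub_is_clique r1 r2 S : subrel r1 r2 -> is_clique r1 S -> is_clique r2 S.
Proof. by move=> sub /cliqueP cl; apply/cliqueP => x y xS yS nxy; apply/sub/cl. Qed.

Lemma eq_is_clique r1 r2 : r1 =2 r2 -> is_clique r1 =1 is_clique r2.
Proof. by move=> e S; apply/idP/idP; apply: sub_is_clique => x y; rewrite e. Qed.

Lemma eq_numK s r1 r2 : r1 =2 r2 -> numK s r1 = numK s r2.
Proof. by move=> e; apply: eq_card => S; rewrite !inE (eq_is_clique e). Qed.

Lemma eq_Kfree m r1 r2 : r1 =2 r2 -> Kfree m r1 = Kfree m r2.
Proof. by move=> e; apply: eq_forallb => S; rewrite (eq_is_clique e). Qed.

Lemma subset_is_clique r (A B : {set 'I_n}) : A \subset B -> is_clique r B -> is_clique r A.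
Proof. by move=> /subsetP AB /cliqueP cl; apply/cliqueP => x y /AB xB /AB yB; apply: cl. Qed.

Lemma numK2_gt0 r a : 2 <= a -> 0 < numK a r -> 0 < numK 2 r.
Proof.
move=> a2 /card_gt0P[S]; rewrite inE => /andP[/eqP cS cl].
have /card_gt1P[x [y [xS yS nxy]]] : 1 < #|S| by rewrite cS.
apply/card_gt0P; exists [set x; y]; rewrite inE cards2 nxy eqxx /=.
by apply: subset_is_clique cl; apply/subsetP => z; rewrite !inE => /orP[] /eqP->.
Qed.

Lemma sub_Kfree m r1 r2 : subrel r1 r2 -> Kfree m r2 -> Kfree m r1.
Proof.
move=> sub /forallP Kf; apply/forallP => S; apply/implyP => cS.
by apply: contra (implyP (Kf S) cS); apply: sub_is_clique.
Qed.

Lemma Kfree_clique_card m r S : Kfree m r -> is_clique r S -> #|S| < m.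
Proof.
move=> /forallP Kf cl; rewrite ltnNge; apply/negP => mS.
pose T := [set x in take m (enum S)].
have cT : #|T| = m.
  rewrite cardsE; move/card_uniqP: (take_uniq m (enum_uniq S)) => ->.
  by rewrite size_takel // -cardE.
move: (Kf T); rewrite cT eqxx /= => /negP; apply; apply: subset_is_clique cl.
by apply/subsetP => x; rewrite inE => /mem_take; rewrite mem_enum.
Qed.

End Cliques.

Section CliquePolynomial.
Variable n : nat.
Implicit Types (r : rel 'I_n) (w : 'I_n -> nat) (S : {set 'I_n}).

Definition support w := [set x | w x != 0].

Definition clique_poly r s w : nat :=
  \sum_(S : {set 'I_n} | (#|S| == s) && is_clique r S) \prod_(x in S) w x.

Definition link_poly r s w u : nat :=
  \sum_(S : {set 'I_n} | [&& #|S| == s, is_clique r S & u \in S]) \prod_(x in S :\ u) w x.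

Lemma eq_clique_poly r s w1 w2 : w1 =1 w2 -> clique_poly r s w1 = clique_poly r s w2.
Proof. by move=> e; apply: eq_bigr => S _; apply: eq_bigr. Qed.

Lemma numK_clique_poly r s : numK s r = clique_poly r s (fun _ => 1).
Proof.
rewrite /numK /clique_poly -sum1_card.
by apply: eq_big => [S|S _]; rewrite ?inE // prod_nat_const exp1n.
Qed.

Lemma clique_poly_nonadj r s w u v : u != v -> ~~ r u v ->
  exists C, forall w', (forall x, x != u -> x != v -> w' x = w x) ->
    clique_poly r s w' = C + w' u * link_poly r s w u + w' v * link_poly r s w v.
Proof.
move=> nuv nr.
exists (\sum_(S : {set 'I_n} | (#|S| == s) && is_clique r S && (u \notin S) && (v \notin S))
          \prod_(x in S) w x) => w' hw.
have hw' S z : z \in S -> (u \in S -> z != u) -> (v \in S -> z != v) -> w' z = w z.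
  move=> zS hu hv; apply: hw.
    by case uS: (u \in S); [exact: hu | apply: contraFN uS => /eqP <-].
  by case vS: (v \in S); [exact: hv | apply: contraFN vS => /eqP <-].
rewrite /clique_poly (bigID [pred S : {set 'I_n} | u \in S]) /=.
rewrite [X in _ + X = _](bigID [pred S : {set 'I_n} | v \in S]) /=.
rewrite addnA addnC addnA; congr (_ + _ + _).
- apply: eq_bigr => S /andP[/andP[_ uS] vS]; apply: eq_bigr => z zS.
  by apply: (hw' S); rewrite ?(negbTE uS) ?(negbTE vS).
- rewrite /link_poly big_distrr /=; apply: eq_big => [S|S /andP[/andP[_ cl] uS]].
    by rewrite andbA.
  rewrite (big_setD1 u uS) /=; congr (_ * _); apply: eq_bigr => z; rewrite !inE.
  case/andP=> zu zS; apply: (hw' S) => // vS; apply: contraNneq nr => zv.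
  by rewrite -zv; apply: (cliqueP _ _ cl); rewrite // eq_sym.
- rewrite /link_poly big_distrr /=; apply: eq_big => [S|S /andP[/andP[/andP[_ cl] _] vS]].
    case uS: (u \in S); case vS: (v \in S); rewrite ?andbF ?andbT //=.
    by case: (#|S| == s) => //=; apply/esym/negbTE; apply: contra nr => /cliqueP; apply.
  rewrite (big_setD1 v vS) /=; congr (_ * _); apply: eq_bigr => z; rewrite !inE.
  case/andP=> zv zS; apply: (hw' S) => // uS; apply: contraNneq nr => zu.
  by rewrite -zu; apply: (cliqueP _ _ cl).
Qed.

Definition move_weight w u v : 'I_n -> nat :=
  fun x => if x == u then 0 else if x == v then w u + w v else w x.

Lemma move_weight_out w u v x : x != u -> x != v -> move_weight w u v x = w x.
Proof. by rewrite /move_weight => /negbTE -> /negbTE ->. Qed.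

Lemma sum_move_weight w u v (P : pred 'I_n) : u != v -> P u = P v ->
  \sum_(x | P x) move_weight w u v x = \sum_(x | P x) w x.
Proof.
move=> nuv Puv; case Pu: (P u); last first.
  apply: eq_bigr => x Px; apply: move_weight_out.
    by apply: contraTneq Px => ->; rewrite Pu.
  by apply: contraTneq Px => ->; rewrite -Puv Pu.
have Pv' : P v && (v != u) by rewrite -Puv Pu eq_sym.
rewrite [LHS](bigD1 u) // [RHS](bigD1 u) //= (bigD1 v Pv') (bigD1 v Pv') /=.
rewrite {1 2}/move_weight eqxx eq_sym (negbTE nuv) eqxx add0n addnA; congr (_ + _).
by apply: eq_bigr => x /andP[/andP[_ xu] xv]; apply: move_weight_out.
Qed.

Lemma support_move_weight w u v : u != v -> w u != 0 -> w v != 0 ->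
  #|support (move_weight w u v)| < #|support w|.
Proof.
move=> nuv wu wv; rewrite (cardsD1 u (support w)) inE wu ltnS subset_leq_card //.
apply/subsetP => x; rewrite !inE /move_weight.
case: (eqVneq x u) => [->|xu]; first by rewrite eqxx.
by case: (eqVneq x v) => [->|xv] /=; rewrite ?wv.
Qed.

Lemma clique_poly_move_step r a b al be w u v : u != v -> ~~ r u v ->
  exists2 w', w' = move_weight w u v \/ w' = move_weight w v u &
    al * clique_poly r a w + be * clique_poly r b w' <=
    al * clique_poly r a w' + be * clique_poly r b w.
Proof.
move=> nuv nr; have nvu : v != u by rewrite eq_sym.
have [Ca hCa] := clique_poly_nonadj a w nuv nr.
have [Cb hCb] := clique_poly_nonadj b w nuv nr.
have moved x y : x != y -> move_weight w x y x = 0 /\ move_weight w x y y = w x + w y.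
  by rewrite /move_weight eqxx eq_sym => /negbTE ->; rewrite eqxx.
have [uv_u uv_v] := moved u v nuv; have [vu_v vu_u] := moved v u nvu.
have Pa := hCa w (fun _ _ _ => erefl); have Pb := hCb w (fun _ _ _ => erefl).
have [le|lt] := leqP (al * link_poly r a w u + be * link_poly r b w v)
                     (al * link_poly r a w v + be * link_poly r b w u).
  exists (move_weight w u v); first by left.
  by rewrite Pa Pb (hCa _ (@move_weight_out w u v)) (hCb _ (@move_weight_out w u v)) uv_u uv_v; nia.
exists (move_weight w v u); first by right.
have out x : x != u -> x != v -> move_weight w v u x = w x.
  by move=> xu xv; apply: move_weight_out.
by rewrite Pa Pb (hCa _ out) (hCb _ out) vu_u vu_v; nia.
Qed.

(* In nat, with the subtracted terms moved across: al * P_a - be * P_b does not decrease. *)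
Lemma clique_poly_concentrate r a b al be w : exists w',
  [/\ \sum_x w' x = \sum_x w x, is_clique r (support w') &
      al * clique_poly r a w + be * clique_poly r b w' <=
      al * clique_poly r a w' + be * clique_poly r b w].
Proof.
have [N] := ubnP #|support w|; elim: N w => // N IH w hN.
have [cl|/forallPn[u]] := boolP (is_clique r (support w)); first by exists w.
rewrite negb_imply => /andP[uS /forallPn[v]].
rewrite negb_imply negb_imply => /andP[vS /andP[nuv nr]].
have [w1 w1E step] := clique_poly_move_step a b al be w nuv nr.
have [|w' [sum' cl' step']] := IH w1.
  rewrite -ltnS (leq_trans _ hN) // ltnS.
  rewrite !inE in uS vS; case: w1E => ->; first exact: support_move_weight.
  by apply: support_move_weight; rewrite // eq_sym.
have sum1 : \sum_x w1 x = \sum_x w x.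
  by case: w1E => ->; rewrite sum_move_weight // eq_sym.
by exists w'; split; [rewrite sum' | | lia].
Qed.

End CliquePolynomial.

Lemma subset_cons_notin (T : finType) (S : {set T}) x (l : seq T) :
  x \notin l -> (S \subset x :: l) && (x \notin S) = (S \subset l).
Proof.
move=> xl; apply/andP/subsetP => [[/subsetP sub xS] y yS | sub].
  by have := sub y yS; rewrite inE => /predU1P[ey|//]; rewrite -ey yS in xS.
split; first by apply/subsetP => y /sub; rewrite inE => ->; rewrite orbT.
by apply: contra xl => /sub.
Qed.

Lemma elemsym_subsets (T : finType) (w : T -> nat) (l : seq T) s : uniq l ->
  \sum_(S : {set T} | (S \subset l) && (#|S| == s)) \prod_(x in S) w x = elemsym (map w l) s.
Proof.
elim: l s => [|x l IH] s /=.
  have nil0 (S : {set T}) : (S \subset [::]) = (S == set0).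
    by rewrite -subset0; apply: eq_subset_r => y; rewrite inE.
  case: s => [|s] _.
    rewrite (big_pred1 set0) ?big_set0 // => S.
    by rewrite nil0 andb_idr // => /eqP->; rewrite cards0.
  by rewrite big_pred0 // => S; rewrite nil0; apply/andP => -[/eqP-> ]; rewrite cards0.
case/andP => xl ul; rewrite (bigID [pred S : {set T} | x \in S]) /= addnC; congr (_ + _).
  by rewrite -IH //; apply: eq_bigl => S; rewrite andbAC subset_cons_notin.
case: s => [|s].
  by rewrite big_pred0 // => S; apply/andP => -[/andP[_ /eqP/cards0_eq->]]; rewrite inE.
rewrite (reindex_onto (fun S => x |: S) (fun S => S :\ x)) /=; last first.
  by move=> S /andP[_ xS]; rewrite setD1K.
rewrite -IH // big_distrr /=; apply: eq_big => [S|S /andP[/andP[/andP[_ _] _] /eqP <-]].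
  case xS: (x \in S).
    have /negbTE-> : ~~ (S \subset l) by apply/subsetP => /(_ x xS); rewrite (negbTE xl).
    by apply/negbTE/negP => /andP[_ /eqP e]; move: xS; rewrite -e !inE eqxx.
  rewrite setU1K ?xS // eqxx setU11 !andbT cardsU1 xS add1n eqSS.
  congr (_ && _); rewrite -(subset_cons_notin S xl) xS andbT.
  apply/subsetP/subsetP => sub y; first by move=> yS; apply: sub; rewrite !inE yS orbT.
  by rewrite !inE => /predU1P[->|/sub]; rewrite ?eqxx // inE.
by rewrite big_setU1 //= !inE eqxx.
Qed.

Section CliqueSupport.
Variable n : nat.
Implicit Types (r : rel 'I_n) (w : 'I_n -> nat).

Lemma clique_poly_clique_support r s w : is_clique r (support w) ->
  clique_poly r s w = elemsym [seq w x | x <- enum 'I_n] s.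
Proof.
move=> cl; rewrite -elemsym_subsets ?enum_uniq //.
rewrite (eq_bigl (fun S : {set 'I_n} => #|S| == s)); last first.
  by move=> S; rewrite /= (_ : S \subset enum 'I_n) //; apply/subsetP => y; rewrite mem_enum.
rewrite [RHS](bigID [pred S : {set 'I_n} | is_clique r S]) /= [X in _ + X]big1 ?addn0 //.
move=> S /andP[_ ncl]; have /subsetPn[x xS wx0] : ~~ (S \subset support w).
  by apply: contra ncl => sub; apply: subset_is_clique sub cl.
by rewrite (bigD1 x xS) /=; move: wx0; rewrite inE negbK => /eqP->.
Qed.

Lemma padded_weight_seq R w : #|support w| <= R -> exists l,
  [/\ size l = R, sumn l = \sum_x w x & elemsym l =1 elemsym [seq w x | x <- enum 'I_n]].
Proof.
move=> hR; set l0 := [seq x <- [seq w x | x <- enum 'I_n] | x != 0].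
have sz : size l0 = #|support w|.
  rewrite size_filter count_map enumT cardE /enum_mem size_filter.
  by apply: eq_count => x; rewrite /= !inE.
exists (l0 ++ nseq (R - size l0) 0); split.
- by rewrite size_cat size_nseq sz; lia.
- rewrite sumn_cat sumn_nseq mul0n addn0 sumnE big_filter big_map big_mkcond big_enum /=.
  by apply: eq_bigr => x _; case: eqP => [->|].
- by move=> s; rewrite elemsym_cat_nseq0 elemsym_filter_neq0.
Qed.

End CliqueSupport.

Section Twins.
Variable n : nat.
Implicit Types (r : rel 'I_n) (w : 'I_n -> nat) (S : {set 'I_n}).

Definition twins r u v := ~~ r u v /\ forall x y, r (tperm u v x) (tperm u v y) = r x y.

Lemma clique_tperm r u v S : twins r u v -> is_clique r (tperm u v @: S) = is_clique r S.
Proof.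
move=> [_ aut]; apply/cliqueP/cliqueP => cl.
  move=> x y xS yS nxy; rewrite -aut; apply: cl; rewrite ?imset_f ?(inj_eq perm_inj) //.
move=> _ _ /imsetP[x xS ->] /imsetP[y yS ->] nxy.
by rewrite aut; apply: cl => //; apply: contra nxy => /eqP->.
Qed.

Lemma link_poly_twins r s w u v : u != v -> twins r u v ->
  link_poly r s w u = link_poly r s w v.
Proof.
move=> nuv tw; have [nr _] := tw.
pose f S := tperm u v @: S.
have fK : involutive f by move=> S; rewrite /f -imset_comp (eq_imset _ (tpermK u v)) imset_id.
have f_inj : injective (tperm u v) by exact: perm_inj.
have Pf S : [&& #|f S| == s, is_clique r (f S) & u \in f S] =
            [&& #|S| == s, is_clique r S & v \in S].
  by rewrite /f card_imset ?clique_tperm // -[u in u \in _](tpermR u v) mem_imset.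
rewrite /link_poly (reindex_inj (inv_inj fK)) /=.
apply: eq_big => [S|S]; rewrite Pf // => /and3P[_ cl vS].
have uS : u \notin S by apply: contra nr => uS; apply: (cliqueP _ _ cl).
have -> : f S :\ u = f (S :\ v).
  apply/setP => x; rewrite /f -[x](tpermK u v) !inE !mem_imset // !inE tpermK.
  by rewrite (can2_eq (tpermK u v) (tpermK u v)) tpermR.
rewrite big_imset /=; last by move=> x y _ _; apply: f_inj.
apply: eq_bigr => x; rewrite !inE => /andP[xv xS]; rewrite tpermD 1?eq_sym //.
by apply: contraNneq uS => <-.
Qed.

Lemma clique_poly_move_twins r s w u v : u != v -> twins r u v ->
  clique_poly r s (move_weight w u v) = clique_poly r s w.
Proof.
move=> nuv tw; have [C hC] := clique_poly_nonadj s w nuv tw.1.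
rewrite (hC w) // (hC (move_weight w u v)); last by move=> x; apply: move_weight_out.
by rewrite (link_poly_twins s w nuv tw) /move_weight eqxx eq_sym (negbTE nuv) eqxx; lia.
Qed.

Lemma clique_poly_retract r s (rho : 'I_n -> 'I_n) :
  (forall x, rho (rho x) = rho x) -> (forall x, rho x != x -> twins r x (rho x)) ->
  forall w, clique_poly r s w = clique_poly r s (fun y => \sum_(x | rho x == y) w x).
Proof.
move=> rhoK tw w.
have [N] := ubnP #|[set x | (rho x != x) && (w x != 0)]|; elim: N w => // N IH w hN.
have [u /andP[moved wu] | fixed] := pickP [pred x | (rho x != x) && (w x != 0)]; last first.
  apply: eq_clique_poly => y; have [fy|nfy] := eqVneq (rho y) y.
    rewrite (bigD1 y) /= ?fy // big1 ?addn0 // => x /andP[/eqP rx xy].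
    by apply/eqP; move: (fixed x); rewrite /= rx eq_sym xy /= => /negbFE.
  rewrite big1; first by move: (fixed y); rewrite /= nfy /= => /negbFE/eqP.
  by move=> x /eqP rx; move: nfy; rewrite -rx rhoK eqxx.
have nuv : u != rho u by rewrite eq_sym.
rewrite -(clique_poly_move_twins s w nuv (tw u moved)) IH; last first.
  rewrite -ltnS (leq_trans _ hN) // ltnS [X in _ < X](cardsD1 u) inE moved wu add1n ltnS.
  apply: subset_leq_card; apply/subsetP => x; rewrite !inE => /andP[mx wx].
  have xu : x != u by apply: contraNneq wx => ->; rewrite /move_weight eqxx.
  have xv : x != rho u by apply: contraNneq mx => ->; rewrite rhoK.
  by rewrite xu mx -(move_weight_out w xu xv).
by apply: eq_clique_poly => y; rewrite sum_move_weight // rhoK.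
Qed.

End Twins.

Definition residue_count R n y := count (fun x => x %% R == y) (iota 0 n).

Lemma residue_countE R n y : y < R -> residue_count R n y = n %/ R + (y < n %% R).
Proof.
move=> yR; have R0 : 0 < R by lia.
elim: n => [|n IH]; first by rewrite /residue_count div0n mod0n.
rewrite /residue_count -addn1 iotaD count_cat -/(residue_count R n y) IH /= addn0 add0n.
have := divn_eq n R; have := divn_eq (n + 1) R; have := ltn_pmod n R0; have := ltn_pmod (n + 1) R0.
case: (ltnP y (n %% R)); case: (ltnP y ((n + 1) %% R)); case: eqP => /=; nia.
Qed.

Lemma residue_count_out R n y : 0 < R -> minn R n <= y -> residue_count R n y = 0.
Proof.
move=> R0 Ry; rewrite -(count_pred0 (iota 0 n)); apply: eq_in_count => x /=.
rewrite mem_iota => /andP[_ xn]; apply/eqP => xy.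
by have := ltn_pmod x R0; have := leq_mod x R; lia.
Qed.

Lemma sumn_residue_counts R n : 0 < R -> sumn [seq residue_count R n y | y <- iota 0 R] = n.
Proof.
move=> R0; rewrite sumnE big_map /residue_count.
under eq_bigr do rewrite -sum1_count big_mkcond /=.
rewrite exchange_big /= -[RHS](size_iota 0 n) -count_predT -sum1_count big_mkcond /=.
apply: eq_bigr => x _; rewrite -big_mkcond sum1_count.
rewrite (@eq_count _ _ (pred1 (x %% R))) => [|y]; last by rewrite /= eq_sym.
by rewrite count_uniq_mem ?iota_uniq // mem_iota ltn_pmod.
Qed.

Lemma elemsym_residue_counts R n N : 0 < R -> minn R n <= N ->
  elemsym [seq residue_count R n y | y <- iota 0 N] =1
  elemsym [seq residue_count R n y | y <- iota 0 (minn R n)].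
Proof.
move=> R0 le_N; rewrite -(subnKC le_N) iotaD map_cat add0n.
have -> : [seq residue_count R n y | y <- iota (minn R n) (N - minn R n)] = nseq (N - minn R n) 0.
  rewrite -[in RHS](size_iota (minn R n) (N - minn R n)) -(size_map (residue_count R n)).
  apply/all_pred1P/allP => z /mapP[y]; rewrite mem_iota => /andP[le_y _] ->.
  by rewrite /= residue_count_out.
exact: elemsym_cat_nseq0.
Qed.

Lemma residue_counts_balanced R n :
  {in [seq residue_count R n y | y <- iota 0 R] &, forall a b, a <= b.+1}.
Proof.
move=> _ _ /mapP[x + ->] /mapP[y + ->]; rewrite !mem_iota /= => xR yR.
by rewrite !residue_countE //; case: (x < n %% R); case: (y < n %% R) => /=; lia.
Qed.

Section TuranGraph.
Variables m n : nat.
Hypothesis m2 : 2 <= m.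
Let R := m - 1.
Let R0 : 0 < R. Proof. rewrite /R; lia. Qed.

Definition residue_rep (x : 'I_n) : 'I_n := Ordinal (leq_ltn_trans (leq_mod x R) (ltn_ord x)).

Lemma residue_repK x : residue_rep (residue_rep x) = residue_rep x.
Proof. by apply: val_inj; rewrite /= modn_mod. Qed.

Lemma turan_twins_rep x : twins (turan m n) x (residue_rep x).
Proof.
have res a : tperm x (residue_rep x) a %% R = a %% R.
  by case: tpermP => [->|->|] //=; rewrite modn_mod.
by split=> [|a b]; rewrite /turan -/R ?res //= modn_mod eqxx.
Qed.

Lemma residue_class_card (y : 'I_n) :
  \sum_(x | residue_rep x == y) 1 = residue_count R n y.
Proof.
rewrite /residue_count -sum1_count -[n in iota 0 n]subn0 -/(index_iota 0 n) big_mkord.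
by apply: eq_bigl => x; rewrite -val_eqE.
Qed.

Lemma numK_turan s : numK s (turan m n) = elemsym (balanced_seq R n) s.
Proof.
rewrite numK_clique_poly.
rewrite (clique_poly_retract s residue_repK) => [|x _]; last exact: turan_twins_rep.
rewrite (eq_clique_poly _ _ residue_class_card) clique_poly_clique_support; last first.
  have lt_R (y : 'I_n) : y \in support (residue_count R n) -> y < R.
    by rewrite inE ltnNge; apply: contra => Ry; rewrite residue_count_out // geq_min Ry.
  apply/cliqueP => x y /lt_R xR /lt_R yR nxy.
  by rewrite /turan -/R !modn_small.
rewrite (map_comp (residue_count R n) val) val_enum_ord.
rewrite (elemsym_residue_counts _ (geq_minr R n)) // -(elemsym_residue_counts _ (geq_minl R n)) //.
apply: elemsym_balanced => //.
- by rewrite size_map size_iota.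
- exact: sumn_residue_counts.
- exact: residue_counts_balanced.
Qed.

Lemma turan_Kfree : Kfree m (turan m n).
Proof.
apply/forallP => S; apply/implyP => /eqP cS; apply/negP => cl.
pose f (x : 'I_n) : 'I_R := Ordinal (ltn_pmod x R0).
have f_inj : {in S &, injective f}.
  move=> x y xS yS /(congr1 val) /= e; apply/eqP; apply/negPn/negP => nxy.
  by move: (cliqueP _ _ cl x y xS yS nxy); rewrite /turan -/R e eqxx.
by have := max_card (f @: S); rewrite card_in_imset // card_ord cS /R; lia.
Qed.

End TuranGraph.

Section KmFree.
Variables (n m : nat) (r : rel 'I_n).
Hypotheses (m2 : 2 <= m) (Kf : Kfree m r).

Lemma Kfree_clique_poly_seq w : is_clique r (support w) -> exists l,
  [/\ size l = m - 1, sumn l = \sum_x w x & forall s, clique_poly r s w = elemsym l s].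
Proof.
move=> cl; have le_supp : #|support w| <= m - 1.
  by rewrite -ltnS -subSn ?(ltnW m2) // subn1; exact: Kfree_clique_card Kf cl.
have [l [size_l sum_l el]] := padded_weight_seq le_supp.
by exists l; split=> // s; rewrite clique_poly_clique_support // el.
Qed.

Lemma Kfree_numK2_le : numK 2 r <= numK 2 (turan m n).
Proof.
have [w [sum_w cl le_w]] := clique_poly_concentrate r 2 2 1 0 (fun _ => 1).
have [l [size_l sum_l el]] := Kfree_clique_poly_seq cl.
rewrite numK_clique_poly numK_turan //; apply: leq_trans (_ : clique_poly r 2 w <= _).
  by move: le_w; rewrite !mul1n !mul0n !addn0.
by rewrite el; apply: elemsym2_le_balanced; rewrite ?subn_gt0 ?sum_l ?sum_w ?sum1_card ?card_ord.
Qed.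

Lemma Kfree_numK_ratio a : 2 <= a ->
  numK a r * numK 2 (turan m n) <= numK 2 r * numK a (turan m n).
Proof.
move=> a2; rewrite !numK_turan // !numK_clique_poly.
set E := elemsym _ 2; set N := elemsym _ a.
have [w [sum_w cl le_w]] := clique_poly_concentrate r a 2 E N (fun _ => 1).
have [l [size_l sum_l el]] := Kfree_clique_poly_seq cl.
have : elemsym l a * E <= elemsym l 2 * N.
  by apply: elemsym_ratio_le_balanced; rewrite ?subn_gt0 ?sum_l ?sum_w ?sum1_card ?card_ord.
by rewrite !el in le_w; nia.
Qed.

End KmFree.

Section Colourings.
Variables (n k : nat) (c : colgraph n k).

Lemma cg_col_sub_adj i : subrel (cg_col c i) (cg_adj c).
Proof. by move=> x y /eqP; rewrite /cg_adj => ->. Qed.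

Lemma sum_numK2_cg_col : \sum_i numK 2 (cg_col c i) <= numK 2 (cg_adj c).
Proof.
have numK_sum s r : numK s r = \sum_(S : {set 'I_n}) ((#|S| == s) && is_clique r S).
  by rewrite /numK -sum1_card big_mkcond; apply: eq_bigr => S _; rewrite inE; case: (_ && _).
rewrite numK_sum (eq_bigr _ (fun i _ => numK_sum 2 (cg_col c i))) exchange_big leq_sum // => S _.
have [/existsP[i /andP[cS cl]] | /existsPn none] :=
  boolP [exists i, (#|S| == 2) && is_clique (cg_col c i) S]; last first.
  by rewrite big1 // => i _; apply/eqP; rewrite eqb0 none.
have /card_gt1P[x [y [xS yS nxy]]] : 1 < #|S| by rewrite (eqP cS).
rewrite (bigD1 i) //= cS cl (sub_is_clique (@cg_col_sub_adj i) cl) big1 // => j ji.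
apply/eqP; rewrite eqb0; apply: contra ji => /andP[_ clj].
move: (cliqueP _ _ cl x y xS yS nxy) (cliqueP _ _ clj x y xS yS nxy).
by rewrite /cg_col => /eqP-> /eqP[->].
Qed.

End Colourings.

Lemma colour_sum_le_turan n k m (a : 'I_k -> nat) (c : colgraph n k) :
  2 <= m -> (forall i, 2 <= a i) -> Kfree m (cg_adj c) ->
  \sum_i numK (a i) (cg_col c i) <= \max_i numK (a i) (turan m n).
Proof.
move=> m2 a2 Kf; set M := \max_i _; set E := numK 2 (turan m n).
have edges : \sum_i numK 2 (cg_col c i) <= E.
  exact: leq_trans (sum_numK2_cg_col c) (Kfree_numK2_le m2 Kf).
have Kf_col i : Kfree m (cg_col c i) := sub_Kfree (@cg_col_sub_adj _ _ c i) Kf.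
have [E0|E_gt0] := posnP E.
  rewrite big1 // => i _; have [//|/(numK2_gt0 (a2 i))] := posnP (numK (a i) (cg_col c i)).
  by move: edges; rewrite E0 leqn0 sum_nat_eq0 => /forallP/(_ i)/eqP->.
rewrite -(leq_pmul2r E_gt0) big_distrl /= mulnC.
apply: (@leq_trans (\sum_i numK 2 (cg_col c i) * M)).
  apply: leq_sum => i _; apply: leq_trans (Kfree_numK_ratio m2 (Kf_col i) (a2 i)) _.
  by rewrite leq_mul2l leq_bigmax ?orbT.
by rewrite -big_distrl /= leq_mul2r edges orbT.
Qed.

Definition mono_colouring n k (r : rel 'I_n) (i : 'I_k) : colgraph n k :=
  [ffun p => if r p.1 p.2 then Some i else None].

Lemma cg_adj_mono n k r (i : 'I_k) : cg_adj (mono_colouring r i) =2 r :> rel 'I_n.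
Proof. by move=> x y; rewrite /cg_adj ffunE /=; case: (r x y). Qed.

Lemma cg_col_mono n k r (i : 'I_k) : cg_col (mono_colouring r i) i =2 r :> rel 'I_n.
Proof. by move=> x y; rewrite /cg_col ffunE /=; case: (r x y); rewrite ?eqxx. Qed.

Lemma valid_mono_colouring n k r (i : 'I_k) : irreflexive r -> symmetric r ->
  valid_colgraph (mono_colouring r i : colgraph n k).
Proof.
move=> irr sym; apply/andP; split; apply/forallP => x; rewrite ?ffunE /= ?irr //.
by apply/forallP => y; rewrite !ffunE /= sym.
Qed.

Theorem mainTheorem8 (m k : nat) (a : 'I_k -> nat) :
  2 <= m -> (forall i, 2 <= a i) ->
  forall n : nat, ex_col n k a m = \max_(i < k) numK (a i) (turan m n).
Proof.
move=> m2 a2 n; apply/eqP; rewrite eqn_leq; apply/andP; split.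
  by apply/bigmax_leqP => c /andP[_ Kf]; apply: colour_sum_le_turan.
apply/bigmax_leqP => i _; pose c := mono_colouring (turan m n) i.
have turan_irr : irreflexive (turan m n) by move=> x; rewrite /turan eqxx.
have turan_sym : symmetric (turan m n) by move=> x y; rewrite /turan eq_sym.
have Kf : Kfree m (cg_adj c) by rewrite (eq_Kfree _ (cg_adj_mono _ _)) turan_Kfree.
apply: leq_trans (leq_bigmax_cond c _); last by rewrite valid_mono_colouring.
by rewrite (bigD1 i) //= (eq_numK _ (cg_col_mono _ _)) leq_addr.
Qed.
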